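(* Fix parameters and a population size vector $\mathbf m$ as in the context, with Assumption (A). Let $\mathbf y^\star\in\arg\min_{\mathbf y\in\mathcal Y}\overline{SC}(\mathbf y)$ be any minimizer of the social cost, and let $d^\dagger=\min\{d\in\mathcal D: y^\star_d>0\}$, with $d^\dagger=D_{\max}+1$ if this set is empty. If $d^\dagger<D_{\max}$, then $y^\star_d=m_d$ for all $d>d^\dagger$.
   Context: Let $D_{\max}\in\mathbb N$, $\mathcal D=\{1,\dots,D_{\max}\}$, $\mathcal A=\{I,N,P\}$. A population size vector is $\mathbf m=(m_d)_{d\in\mathcal D}$ with $m_d>0$, $\sum_d m_d=1$. A social state is $\mathbf x=(x_{d,a})$ with $x_{d,a}\ge0$, $\sum_a x_{d,a}=m_d$. Parameters: $\tau_{DA}\in(0,1]$; $0\le L_P<L_U$, $\Delta L=L_U-L_P$; $0\le p_P^i<p_U^i\le1$; $\beta_{IA}\in(0,1]$; $K\in\mathbb N$; $c_P,c_I\ge0$; $\xi_{\rm cov}\in(0,1]$, $ded\ge0$. Define $w_d=d\,m_d/\sum_{d'}d'm_{d'}$, $g_{d,a}=x_{d,a}/m_d$, $g_{d,U}=g_{d,N}+g_{d,I}$, $\gamma(\mathbf x)=\beta_{IA}\sum_d w_d(g_{d,P}p_P^i+g_{d,U}p_U^i)$, $\lambda(\mathbf x)=\beta_{IA}\sum_d w_d(d-1)(g_{d,P}p_P^i+g_{d,U}p_U^i)$, $e(\mathbf x)=\gamma(\mathbf x)\sum_{k=1}^K\lambda(\mathbf x)^{k-1}$, $C_{d,P}(\mathbf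 x)=\tau_{DA}(1+d\,e(\mathbf x))L_P+c_P$, $C_{d,N}(\mathbf x)=\tau_{DA}(1+d\,e(\mathbf x))L_U$. Let $\mathcal Y=\prod_{d\in\mathcal D}[0,m_d]$ and for $\mathbf y\in\mathcal Y$ let $\mathbf X(\mathbf y)$ be the social state with $X_{d,P}=y_d$, $X_{d,N}=m_d-y_d$, $X_{d,I}=0$. The social cost is $\overline{SC}(\mathbf y)=\sum_{d\in\mathcal D}\big(y_d\,C_{d,P}(\mathbf X(\mathbf y))+(m_d-y_d)\,C_{d,N}(\mathbf X(\mathbf y))\big)$. Assumption (A): $L_P<(1-\xi_{\rm cov})L_U$ and $c_P>c_I+ded$. *)

From mathcomp Require Import all_boot all_order all_algebra.
From mathcomp Require Import reals.
Set Implicit Arguments. Unset Strict Implicit. Unset Printing Implicit Defensive.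
Import Order.TTheory GRing.Theory Num.Theory.
Local Open Scope ring_scope.

(* Actions: I (infected/isolated), N (no protection), P (protection). *)
Inductive action := actI | actN | actP.

Section Model.
Variable R : realType.

(* Degrees d range over 1..Dmax; functions indexed by nat, values outside
   1..Dmax are irrelevant. A social state is x : nat -> action -> R. *)

Definition wdeg (Dmax : nat) (m : nat -> R) (d : nat) : R :=
  d%:R * m d / \sum_(1 <= d' < Dmax.+1) d'%:R * m d'.

Definition gfrac (m : nat -> R) (x : nat -> action -> R) (d : nat) (a : action) : R :=
  x d a / m d.

Definition gU (m : nat -> R) (x : nat -> action -> R) (d : nat) : R :=
  gfrac m x d actN + gfrac m x d actI.

Definition gammaF (Dmax : nat) (m : nat -> R) (beta pP pU : R)
  (x : nat -> action -> R) : R :=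
  beta * \sum_(1 <= d < Dmax.+1)
     wdeg Dmax m d * (gfrac m x d actP * pP + gU m x d * pU).

Definition lambdaF (Dmax : nat) (m : nat -> R) (beta pP pU : R)
  (x : nat -> action -> R) : R :=
  beta * \sum_(1 <= d < Dmax.+1)
     wdeg Dmax m d * (d.-1)%:R * (gfrac m x d actP * pP + gU m x d * pU).

Definition eF (Dmax : nat) (m : nat -> R) (beta pP pU : R) (K : nat)
  (x : nat -> action -> R) : R :=
  gammaF Dmax m beta pP pU x *
  \sum_(1 <= k < K.+1) lambdaF Dmax m beta pP pU x ^+ k.-1.

Definition CostP (Dmax : nat) (m : nat -> R) (tau LP beta pP pU cP : R) (K : nat)
  (x : nat -> action -> R) (d : nat) : R :=
  tau * (1 + d%:R * eF Dmax m beta pP pU K x) * LP + cP.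

Definition CostN (Dmax : nat) (m : nat -> R) (tau LU beta pP pU : R) (K : nat)
  (x : nat -> action -> R) (d : nat) : R :=
  tau * (1 + d%:R * eF Dmax m beta pP pU K x) * LU.

Definition Xof (m y : nat -> R) : nat -> action -> R :=
  fun d a => match a with actP => y d | actN => m d - y d | actI => 0 end.

Definition SCbar (Dmax : nat) (m : nat -> R) (tau LP LU beta pP pU cP : R)
  (K : nat) (y : nat -> R) : R :=
  \sum_(1 <= d < Dmax.+1)
    (y d * CostP Dmax m tau LP beta pP pU cP K (Xof m y) d
     + (m d - y d) * CostN Dmax m tau LU beta pP pU K (Xof m y) d).

Definition inY (Dmax : nat) (m y : nat -> R) : Prop :=
  forall d, (1 <= d <= Dmax)%N -> 0 <= y d <= m d.

End Model.

(** Moving protection from a lower degree [a] to a higher degree [b] leaves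
    the total protection expenditure unchanged, but lowers both the single-hop
    infection probability [gamma] (the protected share is weighted by degree)
    and the branching factor [lambda], hence the expected number of infected
    neighbours [e], and it lowers the degree-weighted exposure to losses.  So
    a social-cost minimiser with some protection at degree [d†] cannot leave
    any higher degree less than fully protected: otherwise transferring a
    little protection upwards would strictly decrease the social cost. *)
From mathcomp Require Import all_boot all_order all_algebra.
From mathcomp Require Import reals ring lra.
Import Order.TTheory GRing.Theory Num.Theory.
Set Implicit Arguments. Unset Strict Implicit. Unset Printing Implicit Defensive.
Local Open Scope ring_scope.

Section Transfer.
Variable V : zmodType.

Definition transfer (y : nat -> V) (a b : nat) (eps : V) (j : nat) : V :=
  if j == a then y a - eps else if j == b then y b + eps else y j.

Lemma big_nat_delta (W : zmodType) (lo hi a : nat) (c : W) : (lo <= a < hi)%N ->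
  \sum_(lo <= j < hi) (if j == a then c else 0) = c.
Proof.
move=> ha; rewrite (bigD1_seq a) ?mem_index_iota ?iota_uniq //= eqxx.
by rewrite big1 ?addr0 // => j /negbTE ->.
Qed.

Lemma big_nat_transfer (W : zmodType) (lo hi a b : nat) (F : nat -> V -> W) y eps :
  (lo <= a < hi)%N -> (lo <= b < hi)%N -> a != b ->
  \sum_(lo <= j < hi) F j (transfer y a b eps j)
  = \sum_(lo <= j < hi) F j (y j)
    + (F a (y a - eps) - F a (y a)) + (F b (y b + eps) - F b (y b)).
Proof.
move=> ha hb hab.
rewrite -(big_nat_delta (F a (y a - eps) - F a (y a)) ha).
rewrite -(big_nat_delta (F b (y b + eps) - F b (y b)) hb) -!big_split /=.
apply: eq_bigr => j _; rewrite /transfer.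
have [->|hja] := eqVneq j a; first by rewrite (negbTE hab) !addr0 subrKC.
have [->|_] := eqVneq j b; first by rewrite addr0 subrKC.
by rewrite !addr0.
Qed.

End Transfer.

Section PowerSum.
Variable R : numDomainType.

Lemma power_sum_ge1 (K : nat) (l : R) : (1 <= K)%N -> 0 <= l ->
  1 <= \sum_(1 <= k < K.+1) l ^+ k.-1.
Proof.
move=> hK hl; rewrite big_ltn ?ltnS // expr0 lerDl.
by apply: sumr_ge0 => k _; apply: exprn_ge0.
Qed.

Lemma ler_power_sum (K : nat) (l l' : R) : 0 <= l' -> l' <= l ->
  \sum_(1 <= k < K.+1) l' ^+ k.-1 <= \sum_(1 <= k < K.+1) l ^+ k.-1.
Proof.
move=> hl' hl'l; apply: ler_sum => k _.
by apply: lerXn2r; rewrite // nnegrE (le_trans hl' hl'l).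
Qed.

End PowerSum.

Section SocialCost.
Variables (R : realType) (Dmax : nat) (m : nat -> R).
Hypothesis hDmax : (1 <= Dmax)%N.
Hypothesis hm_pos : forall d, (1 <= d <= Dmax)%N -> 0 < m d.

Local Notation degree_mass := (\sum_(1 <= d < Dmax.+1) d%:R * m d).

Lemma degree_mass_gt0 : 0 < degree_mass.
Proof.
rewrite big_ltn ?ltnS // mul1r ltr_pwDl ?hm_pos //.
rewrite big_nat_cond; apply: sumr_ge0 => j /andP[/andP[hj hjD] _].
by rewrite mulr_ge0 // ltW // hm_pos // (ltnW hj) -ltnS.
Qed.

Lemma wdeg_ge0 d : (1 <= d <= Dmax)%N -> 0 <= wdeg Dmax m d.
Proof.
move=> hd; rewrite /wdeg divr_ge0 ?(ltW degree_mass_gt0) //.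
by rewrite mulr_ge0 // ltW // hm_pos.
Qed.

Lemma transfer_inY y a b eps :
  (1 <= a <= Dmax)%N -> (1 <= b <= Dmax)%N -> a != b -> inY Dmax m y ->
  0 <= eps -> eps <= y a -> eps <= m b - y b -> inY Dmax m (transfer y a b eps).
Proof.
move=> ha hb hab hY he0 hea heb j hj; rewrite /transfer.
have [->|_] := eqVneq j a; first by have := hY a ha; lra.
have [->|_] := eqVneq j b; first by have := hY b hb; lra.
exact: hY.
Qed.

Section Infection.
Variables (beta pP pU : R) (K : nat).
Hypotheses (hbeta : 0 < beta) (hpP : 0 <= pP) (hpPU : pP < pU) (hK : (1 <= K)%N).

Let infection_rate y d :=
  gfrac m (Xof m y) d actP * pP + gU m (Xof m y) d * pU.

Lemma infection_rate_ge0 y d : inY Dmax m y -> (1 <= d <= Dmax)%N ->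
  0 <= infection_rate y d.
Proof.
move=> hY hd; have /andP[hy0 hym] := hY d hd.
have hmd := ltW (hm_pos hd); have hpU := ltW (le_lt_trans hpP hpPU).
rewrite /infection_rate /gU /gfrac /Xof mul0r addr0.
by rewrite addr_ge0 // mulr_ge0 ?divr_ge0 ?subr_ge0.
Qed.

Lemma gammaF_ge0 y : inY Dmax m y -> 0 <= gammaF Dmax m beta pP pU (Xof m y).
Proof.
move=> hY; rewrite /gammaF mulr_ge0 ?(ltW hbeta) // big_nat_cond.
apply: sumr_ge0 => d /andP[/andP[hd hdD] _]; have hd' : (1 <= d <= Dmax)%N by rewrite hd.
by rewrite mulr_ge0 ?wdeg_ge0 ?infection_rate_ge0.
Qed.

Lemma lambdaF_ge0 y : inY Dmax m y -> 0 <= lambdaF Dmax m beta pP pU (Xof m y).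
Proof.
move=> hY; rewrite /lambdaF mulr_ge0 ?(ltW hbeta) // big_nat_cond.
apply: sumr_ge0 => d /andP[/andP[hd hdD] _]; have hd' : (1 <= d <= Dmax)%N by rewrite hd.
by rewrite mulr_ge0 ?infection_rate_ge0 // mulr_ge0 ?wdeg_ge0.
Qed.

(* Only the terms at [a] and [b] change, since [wdeg d / m d = d / degree_mass]. *)
Lemma gammaF_transfer y a b eps :
  (1 <= a <= Dmax)%N -> (1 <= b <= Dmax)%N -> a != b ->
  gammaF Dmax m beta pP pU (Xof m (transfer y a b eps))
  = gammaF Dmax m beta pP pU (Xof m y)
    - beta * eps * (b%:R - a%:R) * (pU - pP) / degree_mass.
Proof.
move=> ha hb hab; rewrite /gammaF /gU /gfrac /Xof.
rewrite (big_nat_transfer (fun d t => wdeg Dmax m d * (t / m d * pP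
  + ((m d - t) / m d + 0 / m d) * pU))) ?ltnS //.
have hma := hm_pos ha; have hmb := hm_pos hb; have hM := degree_mass_gt0.
rewrite /wdeg; field; rewrite ?gt_eqF //.
Qed.

Lemma lambdaF_transfer y a b eps :
  (1 <= a <= Dmax)%N -> (1 <= b <= Dmax)%N -> a != b ->
  lambdaF Dmax m beta pP pU (Xof m (transfer y a b eps))
  = lambdaF Dmax m beta pP pU (Xof m y)
    - beta * eps * (b%:R * b.-1%:R - a%:R * a.-1%:R) * (pU - pP) / degree_mass.
Proof.
move=> ha hb hab; rewrite /lambdaF /gU /gfrac /Xof.
rewrite (big_nat_transfer (fun d t => wdeg Dmax m d * d.-1%:R * (t / m d * pP
  + ((m d - t) / m d + 0 / m d) * pU))) ?ltnS //.
have hma := hm_pos ha; have hmb := hm_pos hb; have hM := degree_mass_gt0.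
rewrite /wdeg; field; rewrite ?gt_eqF //.
Qed.

Lemma eF_ge0 y : inY Dmax m y -> 0 <= eF Dmax m beta pP pU K (Xof m y).
Proof.
move=> hY; rewrite /eF mulr_ge0 ?gammaF_ge0 //.
exact: le_trans ler01 (power_sum_ge1 hK (lambdaF_ge0 hY)).
Qed.

Lemma eF_transfer_lt y a b eps :
  (1 <= a <= Dmax)%N -> (1 <= b <= Dmax)%N -> (a < b)%N -> 0 < eps ->
  inY Dmax m y -> inY Dmax m (transfer y a b eps) ->
  eF Dmax m beta pP pU K (Xof m (transfer y a b eps))
  < eF Dmax m beta pP pU K (Xof m y).
Proof.
move=> ha hb hab heps hY hY'; have hab' : a != b by rewrite ltn_eqF.
have hM := degree_mass_gt0; have hbaR : (a%:R : R) < b%:R by rewrite ltr_nat.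
have hgamma : gammaF Dmax m beta pP pU (Xof m (transfer y a b eps))
              < gammaF Dmax m beta pP pU (Xof m y).
  rewrite gammaF_transfer // gtrBl.
  apply: divr_gt0 => //; apply: mulr_gt0; last by rewrite subr_gt0.
  by rewrite mulr_gt0 ?mulr_gt0 // subr_gt0.
have hlambda : lambdaF Dmax m beta pP pU (Xof m (transfer y a b eps))
               <= lambdaF Dmax m beta pP pU (Xof m y).
  have hdeg2 : (a%:R * a.-1%:R : R) <= b%:R * b.-1%:R.
    by rewrite -!natrM ler_nat leq_mul ?(ltnW hab) // -!subn1 leq_sub2r // ltnW.
  rewrite lambdaF_transfer // gerBl.
  apply: divr_ge0 (ltW hM); apply: mulr_ge0; last by rewrite subr_ge0 ltW.
  by rewrite !mulr_ge0 ?subr_ge0 ?(ltW hbeta) ?(ltW heps).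
rewrite /eF; set P' := \sum_(1 <= k < K.+1) _.
have hP' : 1 <= P' by apply: power_sum_ge1 => //; exact: lambdaF_ge0.
apply: (lt_le_trans (y := gammaF Dmax m beta pP pU (Xof m y) * P')).
  by rewrite ltr_pM2r // (lt_le_trans ltr01 hP').
by rewrite ler_wpM2l ?gammaF_ge0 // ler_power_sum // lambdaF_ge0.
Qed.

End Infection.

Section Cost.
Variables (tau LP LU beta pP pU cP : R) (K : nat).
Hypotheses (htau : 0 < tau) (hLP : 0 <= LP) (hLPU : LP < LU).
Hypotheses (hbeta : 0 < beta) (hpP : 0 <= pP) (hpPU : pP < pU) (hK : (1 <= K)%N).

Definition base_cost (y : nat -> R) : R :=
  \sum_(1 <= d < Dmax.+1) (y d * (tau * LP + cP) + (m d - y d) * (tau * LU)).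

Definition exposure (y : nat -> R) : R :=
  \sum_(1 <= d < Dmax.+1) tau * d%:R * (y d * LP + (m d - y d) * LU).

Lemma SCbar_decomp y : SCbar Dmax m tau LP LU beta pP pU cP K y
  = base_cost y + eF Dmax m beta pP pU K (Xof m y) * exposure y.
Proof.
rewrite /SCbar /base_cost /exposure mulr_sumr -big_split /=.
by apply: eq_bigr => d _; rewrite /CostP /CostN; ring.
Qed.

Lemma base_cost_transfer y a b eps :
  (1 <= a <= Dmax)%N -> (1 <= b <= Dmax)%N -> a != b ->
  base_cost (transfer y a b eps) = base_cost y.
Proof.
move=> ha hb hab; rewrite /base_cost.
rewrite (big_nat_transfer (fun d t => t * (tau * LP + cP) + (m d - t) * (tau * LU))) ?ltnS //.
ring.
Qed.

Lemma exposure_transfer y a b eps :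
  (1 <= a <= Dmax)%N -> (1 <= b <= Dmax)%N -> a != b ->
  exposure (transfer y a b eps) = exposure y - tau * eps * (b%:R - a%:R) * (LU - LP).
Proof.
move=> ha hb hab; rewrite /exposure.
rewrite (big_nat_transfer (fun d t => tau * d%:R * (t * LP + (m d - t) * LU))) ?ltnS //.
ring.
Qed.

Lemma exposure_ge0 y : inY Dmax m y -> 0 <= exposure y.
Proof.
move=> hY; rewrite /exposure big_nat_cond.
apply: sumr_ge0 => d /andP[/andP[hd hdD] _]; have hd' : (1 <= d <= Dmax)%N by rewrite hd.
have /andP[hy0 hym] := hY d hd'.
have hLU := ltW (le_lt_trans hLP hLPU).
by rewrite mulr_ge0 ?mulr_ge0 ?(ltW htau) // addr_ge0 // mulr_ge0 // subr_ge0.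
Qed.

Lemma SCbar_transfer_lt y a b eps :
  (1 <= a <= Dmax)%N -> (1 <= b <= Dmax)%N -> (a < b)%N -> inY Dmax m y ->
  0 < eps -> eps <= y a -> eps <= m b - y b ->
  SCbar Dmax m tau LP LU beta pP pU cP K (transfer y a b eps)
  < SCbar Dmax m tau LP LU beta pP pU cP K y.
Proof.
move=> ha hb hab hY heps hea heb; have hab' : a != b by rewrite ltn_eqF.
have hY' := transfer_inY ha hb hab' hY (ltW heps) hea heb.
have he := eF_transfer_lt hbeta hpP hpPU hK ha hb hab heps hY hY'.
have hexp : exposure (transfer y a b eps) < exposure y.
  rewrite exposure_transfer // gtrBl.
  apply: mulr_gt0; last by rewrite subr_gt0.
  by rewrite !mulr_gt0 // subr_gt0 ltr_nat.
rewrite !SCbar_decomp base_cost_transfer // ltrD2l.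
apply: le_lt_trans (ler_wpM2r (exposure_ge0 hY') (ltW he)) _.
by rewrite ltr_pM2l // (le_lt_trans (eF_ge0 hbeta hpP hpPU hK hY') he).
Qed.

End Cost.
End SocialCost.

Theorem theorem4 (R : realType) (Dmax : nat) (m : nat -> R)
  (tau LP LU pP pU beta cP cI xi ded : R) (K : nat)
  (hDmax : (1 <= Dmax)%N)
  (hm_pos : forall d, (1 <= d <= Dmax)%N -> 0 < m d)
  (hm_sum : \sum_(1 <= d < Dmax.+1) m d = 1)
  (htau : 0 < tau <= 1)
  (hLP : 0 <= LP) (hLPU : LP < LU)
  (hpP : 0 <= pP) (hpPU : pP < pU) (hpU : pU <= 1)
  (hbeta : 0 < beta <= 1)
  (hK : (1 <= K)%N)
  (hcP : 0 <= cP) (hcI : 0 <= cI)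
  (hxi : 0 < xi <= 1) (hded : 0 <= ded)
  (hA1 : LP < (1 - xi) * LU) (hA2 : cP > cI + ded)
  (ystar : nat -> R)
  (hY : inY Dmax m ystar)
  (hmin : forall y : nat -> R, inY Dmax m y ->
     SCbar Dmax m tau LP LU beta pP pU cP K ystar
       <= SCbar Dmax m tau LP LU beta pP pU cP K y)
  (ddag : nat)
  (hddag_in : (1 <= ddag <= Dmax)%N)
  (hddag_pos : 0 < ystar ddag)
  (hddag_min : forall d, (1 <= d < ddag)%N -> ~ (0 < ystar d))
  (hddag_lt : (ddag < Dmax)%N) :
  forall d, (ddag < d <= Dmax)%N -> ystar d = m d.
Proof.
move=> d /andP[hdd hdD]; have /andP[hdag1 _] := hddag_in.
have hd : (1 <= d <= Dmax)%N by rewrite hdD (leq_trans hdag1 (ltnW hdd)).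
have /andP[_ hym] := hY d hd.
apply/eqP; rewrite eq_le hym /= leNgt; apply/negP => hlt.
set eps := Num.min (ystar ddag) (m d - ystar d).
have heps : 0 < eps by rewrite lt_min hddag_pos subr_gt0.
have hea : eps <= ystar ddag by rewrite ge_min lexx.
have heb : eps <= m d - ystar d by rewrite ge_min lexx orbT.
have hY' := transfer_inY hddag_in hd (negbT (ltn_eqF hdd)) hY (ltW heps) hea heb.
have /andP[htau0 _] := htau; have /andP[hbeta0 _] := hbeta.
have hcost := SCbar_transfer_lt hDmax hm_pos cP htau0 hLP hLPU hbeta0 hpP hpPU hK
  hddag_in hd hdd hY heps hea heb.
by move: (hmin _ hY'); rewrite leNgt hcost.
Qed.
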